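(* Let $\kappa\ge1$, $n=\kappa+1$, and let $G\in\mathcal G_{[n;\kappa]}$ be skew-symmetric. Then $G$ is a zero-sum game: $\sum_{i=1}^n c_i(x)=0$ for every profile $x\in\{1,\dots,\kappa\}^n$.
   Context: A finite game $G\in\mathcal G_{[n;\kappa]}$ has players $\{1,\dots,n\}$, each with strategy set $\{1,\dots,\kappa\}$, and payoff functions $c_i:\{1,\dots,\kappa\}^n\to\mathbb R$. $G$ is skew-symmetric if for every permutation $\sigma\in\mathbf S_n$, every $i$ and every profile, $c_i(x_1,\dots,x_n)=\mathrm{sgn}(\sigma)\,c_{\sigma(i)}(x_{\sigma^{-1}(1)},\dots,x_{\sigma^{-1}(n)})$. *)

From HB Require Import structures.
From mathcomp Require Import all_boot all_order all_algebra all_fingroup.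
From mathcomp Require Import reals.
Set Implicit Arguments. Unset Strict Implicit. Unset Printing Implicit Defensive.
Import GRing.Theory Num.Theory.
Local Open Scope ring_scope.

(* Players are 'I_n (i.e. {0,...,n-1} standing for {1,...,n}); strategies are
   'I_k (standing for {1,...,k}). *)
Definition profile (n k : nat) := {ffun 'I_n -> 'I_k}.

Definition game (R : realType) (n k : nat) := 'I_n -> profile n k -> R.

Definition permute_profile (n k : nat) (s : 'S_n) (x : profile n k) : profile n k :=
  [ffun j => x ((s^-1)%g j)].

Definition skew_symmetric (R : realType) (n k : nat) (c : game R n k) : Prop :=
  forall (s : 'S_n) (i : 'I_n) (x : profile n k),
    c i x = (-1) ^+ odd_perm s * c (s i) (permute_profile s x).

Definition zero_sum (R : realType) (n k : nat) (c : game R n k) : Prop :=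
  forall x : profile n k, \sum_(i < n) c i x = 0.

From HB Require Import structures.
From mathcomp Require Import all_boot all_order all_algebra all_fingroup.
From mathcomp Require Import reals.
Set Implicit Arguments. Unset Strict Implicit. Unset Printing Implicit Defensive.
Import GRing.Theory Num.Theory.
Local Open Scope ring_scope.

(* With more players than strategies, two players i <> j play the same
   strategy in every profile x.  The transposition (i j) is odd and fixes x,
   so skew-symmetry gives c_l(x) = - c_{(i j) l}(x); summing over l shows that
   the total payoff equals its own negation, hence vanishes. *)

Lemma profile_collision (n k : nat) (x : profile n k) :
  (k < n)%N -> exists i j, i != j /\ x i = x j.
Proof.
move=> lt_kn; have /injectivePn[i [j nij xij]] : ~~ injectiveb x.
  apply/injectiveP => /leq_card; rewrite !card_ord.
  by rewrite leqNgt lt_kn.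
by exists i, j.
Qed.

Lemma permute_profile_tperm (n k : nat) (x : profile n k) (i j : 'I_n) :
  x i = x j -> permute_profile (tperm i j) x = x.
Proof.
move=> xij; apply/ffunP => l; rewrite ffunE tpermV.
by case: tpermP => // ->.
Qed.

Lemma skew_symmetric_sum_fixed_odd (R : realType) (n k : nat)
    (c : game R n k) (s : 'S_n) (x : profile n k) :
  skew_symmetric c -> odd_perm s -> permute_profile s x = x ->
  \sum_(l < n) c l x = 0.
Proof.
move=> skew odd_s sx.
have c_antisym l : c l x = - c (s l) x.
  by rewrite (skew s) sx odd_s expr1 mulN1r.
have sum_opp : \sum_(l < n) c l x = - \sum_(l < n) c l x.
  rewrite {1}(reindex_inj (@perm_inj _ s)) -sumrN.
  by apply: eq_bigr => l _; rewrite [in RHS]c_antisym opprK.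
by apply/eqP; rewrite -[_ == 0](mulrn_eq0 _ 2) mulr2n {2}sum_opp subrr.
Qed.

Lemma skew_symmetric_zero_sum (R : realType) (n k : nat) (c : game R n k) :
  (k < n)%N -> skew_symmetric c -> zero_sum c.
Proof.
move=> lt_kn skew x.
have [i [j [nij xij]]] := profile_collision x lt_kn.
apply: (skew_symmetric_sum_fixed_odd skew _ (permute_profile_tperm xij)).
by rewrite odd_tperm nij.
Qed.

Theorem proposition4p2 (R : realType) (k : nat) (c : game R k.+1 k) :
  (1 <= k)%N -> skew_symmetric c -> zero_sum c.
Proof. by move=> _; apply: skew_symmetric_zero_sum. Qed.
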